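(* Consider the transverse-field Ising chain $H=-J\sum_\ell[\sigma^x_\ell\sigma^x_{\ell+1}+h\sigma^z_\ell]$ on a periodic chain of $L$ sites, restricted to the antiperiodic (Neveu–Schwarz) fermion sector with momenta $p=2\pi(n+1/2)/L$, $n$ integer, and let $\alpha_p$ be the Bogoliubov fermions diagonalizing the post-quench Hamiltonian, $n_p=\alpha^\dagger_p\alpha_p$. For $0<p<\pi$ define the ghost fermions $g^\dagger_p=(1-n_{-p})\alpha^\dagger_p+n_{-p}\alpha_p$ and the pair fermions $d^\dagger_p=\prod_{0<k<p}(2\tilde d^\dagger_k\tilde d_k-1)\prod_{0<k\neq p}(2g^\dagger_kg_k-1)\,\tilde d^\dagger_p$ with $\tilde d^\dagger_p=(\alpha^\dagger_p+\alpha_p)\alpha^\dagger_{-p}$; these satisfy canonical anticommutation relations, with $n^d_p=d^\dagger_pd_p$, $n^g_p=g^\dagger_pg_p$, $e^{i\pi\mathcal N_g}=\prod_{0<k<\pi}(2n^g_k-1)$, and the inverse map $\alpha^\dagger_p=(1-n^d_p)g^\dagger_p+n^d_pg_p$, $\alpha^\dagger_{-p}=\prod_{0<k<p}(2n^d_k-1)\,d^\dagger_p\,e^{i\pi\mathcal N_g}(g^\dagger_p-g_p)$. Let $a_i=\frac{1}{\sqrt L}\sum_{0<p<\pi}W_i(p)g_p+W_i(-p)g^\dagger_p$ (with $W_i(-p)=W_i^\dagger(p)$) be Majorana fermions that are linear combinations of the Bogoliubov fermions $\alpha$, written via the inverse map so that the coefficients $W_i(p)$ are operators built from pair fermions and $e^{i\pi\mathcal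 N_g}$ and commute with all ghost operators. Then $$G_0\,a_1\cdots a_n\,G_0=\frac{1}{L^{n/2}}\sum_{-\pi<p_1,\dots,p_n<\pi}W_1(p_1)\cdots W_n(p_n)\,\mathrm{Pf}\Bigl([\theta(p_i)\delta_{p_i,-p_j}]_{i<j}\Bigr)\,G_0,$$ where $[M(i,j)]_{i<j}$ denotes the skew-symmetric $n\times n$ matrix whose upper triangular entries are $M(i,j)$, $\theta$ is the Heaviside step function, $\delta$ is the Kronecker delta, and $G_0\equiv\prod_{0<k<\pi}g_kg^\dagger_k$ is the projector on the ghost vacuum.
   Context: Setting: time evolution after a quench $h_0\to h$ of the transverse field in the periodic transverse-field Ising chain, starting from the ground state at $h_0$. The time-averaged (diagonal, ''pair'') ensemble is $\rho_{PE}=\prod_{0<k}g_kg^\dagger_k\exp\bigl(\sum_{0<p}\log K^2(p)\,d^\dagger_pd_p-\log(1+K^2(p))\bigr)$, i.e. the ghost-vacuum projector times a Gaussian state of pair fermions. Local spin operators are strings of Jordan–Wigner Majorana fermions $a_{2\ell}=\prod_{j<\ell}\sigma^z_j\sigma^x_\ell$, $a_{2\ell-1}=\prod_{j<\ell}\sigma^z_j\sigma^y_\ell$, which are linear in the $\alpha$'s and hence linear in the ghost operators. *)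

From HB Require Import structures.
From mathcomp Require Import all_boot all_order all_algebra all_fingroup.
Set Implicit Arguments. Unset Strict Implicit. Unset Printing Implicit Defensive.
Import Order.TTheory GRing.Theory Num.Theory.
Local Open Scope ring_scope.

(* Momenta of the Neveu-Schwarz sector of a chain of L sites lying in
   (-pi, pi):  p = 2 pi (n + 1/2) / L.  The positive ones (0 < p < pi) are
   n = 0, ..., L./2 - 1; a momentum is encoded as (sign, k) with
   k : 'I_(L./2): (true, k) is p_k = 2 pi (k + 1/2)/L > 0 and (false, k) is
   -p_k.  *)
Definition mom (L : nat) := (bool * 'I_(L./2))%type.

Definition momneg (L : nat) (p : mom L) : mom L := (~~ p.1, p.2).

(* Heaviside step function theta(p) (p is never 0). *)
Definition theta (L : nat) (p : mom L) : bool := p.1.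

Definition skew_upper (R : zmodType) (n : nat) (M : 'I_n -> 'I_n -> R)
  : 'M[R]_n :=
  \matrix_(i, j) (if (i < j)%N then M i j
                  else if (j < i)%N then - M j i else 0).

Definition pfaffian (R : fieldType) (n : nat) (A : 'M[R]_n) : R :=
  if odd n then 0
  else ((2 ^ n./2 * (n./2)`!)%N%:R)^-1 *
       \sum_(s : 'S_n) (-1) ^+ s *
         \prod_(i : 'I_n | ~~ odd i) \prod_(j : 'I_n | val j == i.+1)
            A (s i) (s j).

From HB Require Import structures.
From mathcomp Require Import all_boot all_order all_algebra all_fingroup.
From mathcomp Require Import zify.
Set Implicit Arguments. Unset Strict Implicit. Unset Printing Implicit Defensive.
Import Order.TTheory GRing.Theory Num.Theory.
Local Open Scope ring_scope.

(* Since the coefficients W commute with the ghosts, expanding each a_i in the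
   ghost modes reduces the identity, for each assignment p of momenta, to
   Wick's theorem in the ghost vacuum:
     G0 g(p_1) ... g(p_n) G0 = Pf([theta(p_i) delta_{p_i,-p_j}]_{i<j}) G0.
   G0 is killed by a creator g_k^dag on its right and by an annihilator g_k on
   its left.  So the product vanishes if it starts with a creator; if it
   starts with g_k, anticommuting g_k to the right end yields, with
   alternating signs, one contraction with each later g_k^dag -- the
   expansion of the Pfaffian along its first row -- and induction on n
   concludes.  That expansion follows from the permutation-sum definition of
   the Pfaffian: the signed summand is invariant under exchanging the two
   entries of a pair and under exchanging two pairs, so each of the n
   possible positions of 0 contributes the same amount. *)

Section UnliftPerm.
Variables (n : nat) (i0 : 'I_n.+1).

Definition unlift_perm_fun (s : 'S_n.+1) (k : 'I_n) : 'I_n :=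
  odflt k (unlift (s i0) (s (lift i0 k))).

Lemma lift_unlift_perm_fun (s : 'S_n.+1) k :
  lift (s i0) (unlift_perm_fun s k) = s (lift i0 k).
Proof.
rewrite /unlift_perm_fun; have := neq_lift i0 k.
by rewrite -(inj_eq (@perm_inj _ s)) => /unlift_some[u -> _]; rewrite liftK.
Qed.

Lemma unlift_perm_fun_inj (s : 'S_n.+1) : injective (unlift_perm_fun s).
Proof.
move=> k1 k2 /(congr1 (lift (s i0))).
by rewrite !lift_unlift_perm_fun => /perm_inj /lift_inj.
Qed.

Definition unlift_perm (s : 'S_n.+1) : 'S_n := perm (@unlift_perm_fun_inj s).

Lemma lift_perm_unlift (s : 'S_n.+1) : lift_perm i0 (s i0) (unlift_perm s) = s.
Proof.
apply/permP => k; case: (unliftP i0 k) => [k'|] ->; rewrite ?lift_perm_id //.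
by rewrite lift_perm_lift permE lift_unlift_perm_fun.
Qed.

Lemma unlift_perm_lift j0 (v : 'S_n) : unlift_perm (lift_perm i0 j0 v) = v.
Proof.
apply/permP => k; apply: (@lift_inj _ j0).
by rewrite permE -{1}(lift_perm_id i0 j0 v) lift_unlift_perm_fun lift_perm_lift.
Qed.

Lemma sum_perm_lift (V : nmodType) j0 (f : 'S_n.+1 -> V) :
  \sum_(s : 'S_n.+1 | s i0 == j0) f s = \sum_(v : 'S_n) f (lift_perm i0 j0 v).
Proof.
rewrite (reindex (lift_perm i0 j0)); last first.
  exists unlift_perm => [v _ | s /eqP s_i0]; first exact: unlift_perm_lift.
  by rewrite -s_i0 lift_perm_unlift.
by apply: eq_bigl => v; rewrite lift_perm_id eqxx.
Qed.

End UnliftPerm.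

Lemma ltn_succ_even n (i : 'I_n) : ~~ odd n -> ~~ odd i -> (i.+1 < n)%N.
Proof.
move=> evn evi; rewrite ltn_neqAle ltn_ord andbT.
by apply: contraNneq evn => <-; rewrite /= evi.
Qed.

Lemma val_ordS_even n (i : 'I_n) : ~~ odd n -> ~~ odd i -> val (ordS i) = i.+1.
Proof. by move=> evn evi; rewrite /= modn_small ?ltn_succ_even. Qed.

Lemma ordS_lift0 n (i : 'I_n) : (i.+1 < n)%N -> ordS (lift ord0 i) = lift ord0 (ordS i).
Proof. by move=> lt_Si_n; apply: val_inj; rewrite /= /bump /= !add1n !modn_small. Qed.

Lemma tpermD_odd n (x y z : 'I_n) :
  odd z != odd x -> odd z != odd y -> tperm x y z = z.
Proof. by move=> zx zy; apply: tpermD; [move: zx | move: zy]; apply: contraNneq => ->. Qed.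

Section PfaffianSum.
Variable R : comNzRingType.

Definition pf_term n (A : 'M[R]_n) (s : 'S_n) : R :=
  \prod_(i : 'I_n | ~~ odd i) \prod_(j : 'I_n | val j == i.+1) A (s i) (s j).

Definition pf_sum n (A : 'M[R]_n) : R := \sum_(s : 'S_n) (-1) ^+ s * pf_term A s.

Lemma pf_termE n (A : 'M[R]_n) s : ~~ odd n ->
  pf_term A s = \prod_(i : 'I_n | ~~ odd i) A (s i) (s (ordS i)).
Proof.
move=> evn; apply: eq_bigr => i evi.
by rewrite (big_pred1 (ordS i)) // => j; rewrite /= -val_eqE val_ordS_even.
Qed.

Definition pf_minor m (A : 'M[R]_m.+2) (j : 'I_m.+1) : 'M[R]_m :=
  \matrix_(a, b) A (lift ord0 (lift j a)) (lift ord0 (lift j b)).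

Section Expansion.
Variables (m : nat) (A : 'M[R]_m.+2).
Hypothesis evm : ~~ odd m.
Hypothesis A_skew : forall i j, A i j = - A j i.

Let evm2 : ~~ odd m.+2. Proof. by rewrite /= negbK. Qed.
Let ordS_even (i : 'I_m.+2) : ~~ odd i -> val (ordS i) = i.+1.
Proof. exact: val_ordS_even. Qed.
Let odd_ordS (i : 'I_m.+2) : ~~ odd i -> odd (ordS i).
Proof. by move=> evi; rewrite ordS_even //= evi. Qed.

Definition pf_summand (s : 'S_m.+2) := (-1) ^+ s * pf_term A s.
Local Notation F := pf_summand.

Lemma pf_summand_tperm (x : 'I_m.+2) u : ~~ odd x -> F (tperm x (ordS x) * u) = F u.
Proof.
move=> evx; have oSx := odd_ordS evx.
have xSx : x != ordS x by apply: contraTneq oSx => <-.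
rewrite /F odd_permM odd_tperm xSx signr_addb expr1 mulN1r mulNr -mulrN.
congr (_ * _); rewrite !pf_termE // (bigD1 x) //= [in RHS](bigD1 x) //=.
rewrite permM tpermL permM tpermR [A (u (ordS x)) _]A_skew mulNr opprK.
congr (_ * _); apply: eq_bigr => i /andP [evi ix].
have oSi := odd_ordS evi.
have xi : x != i by rewrite eq_sym.
have Sxi : ordS x != i by apply: contraTneq oSx => ->.
have xSi : x != ordS i by apply: contraTneq oSi => <-.
have SxSi : ordS x != ordS i by rewrite (inj_eq (@ordS_inj _)).
by rewrite !permM !tpermD.
Qed.

Section PairSwap.
Variable x : 'I_m.+2.
Hypothesis evx : ~~ odd x.

Definition pair_swap : 'S_m.+2 := (tperm ord0 x * tperm (ordS ord0) (ordS x))%g.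

Let odd_S0 := odd_ordS (isT : ~~ odd (ord0 : 'I_m.+2)).
Let odd_Sx := odd_ordS evx.

Lemma odd_pair_swap (i : 'I_m.+2) : odd (pair_swap i) = odd i.
Proof.
rewrite /pair_swap permM; case: (tpermP ord0 x i) => [->|->|_ _].
- by rewrite tpermD_odd ?odd_S0 ?odd_Sx ?(negbTE evx).
- by rewrite tpermD_odd ?odd_S0 ?odd_Sx ?(negbTE evx).
- by case: tpermP => [->|->|]; rewrite ?odd_S0 ?odd_Sx.
Qed.

Lemma pair_swap_ordS (i : 'I_m.+2) : ~~ odd i -> pair_swap (ordS i) = ordS (pair_swap i).
Proof.
move=> evi; rewrite /pair_swap !permM.
have oSi := odd_ordS evi.
case: (tpermP ord0 x i) => [->|->|i0 ix].
- by rewrite (tpermD_odd (x := ord0)) ?tpermL ?tpermD_odd ?odd_S0 ?odd_Sx ?(negbTE evx).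
- by rewrite (tpermD_odd (x := ord0)) ?tpermR ?tpermD_odd ?odd_S0 ?odd_Sx ?(negbTE evx).
have S0Si : ordS ord0 != ordS i by rewrite (inj_eq (@ordS_inj _)) eq_sym; apply/eqP.
have SxSi : ordS x != ordS i by rewrite (inj_eq (@ordS_inj _)) eq_sym; apply/eqP.
rewrite (tpermD_odd (z := ordS i)) ?oSi ?(negbTE evx) // (tpermD S0Si SxSi).
by rewrite tpermD_odd ?odd_S0 ?odd_Sx ?(negbTE evi).
Qed.

Lemma pf_summand_pair_swap u : F (pair_swap * u) = F u.
Proof.
rewrite /F odd_permM; have -> : odd_perm pair_swap = false.
  by rewrite odd_permM !odd_tperm (inj_eq (@ordS_inj _)) addbb.
rewrite addFb; congr (_ * _).
rewrite !pf_termE // [in RHS](reindex_inj (@perm_inj _ pair_swap)).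
apply: eq_big => i; first by rewrite odd_pair_swap.
by move=> evi; rewrite !(permM pair_swap) pair_swap_ordS.
Qed.

Lemma pair_swap_x : pair_swap x = ord0.
Proof. by rewrite /pair_swap permM tpermR tpermD_odd ?odd_S0 ?odd_Sx ?(negbTE evx). Qed.

End PairSwap.

Lemma pf_summand_move_to_front (t : 'I_m.+2) :
  exists2 tau : 'S_m.+2, tau t = ord0 & forall u, F (tau * u) = F u.
Proof.
have [odt | evt] := boolP (odd t); last first.
  by exists (pair_swap t); [rewrite pair_swap_x | exact: pf_summand_pair_swap].
pose x : 'I_m.+2 := inord t.-1.
have t_gt0 : (0 < t)%N by move: odt; case: (nat_of_ord t).
have vx : x = t.-1 :> nat by rewrite /x inordK // (leq_ltn_trans (leq_pred _)).
have evx : ~~ odd x by rewrite vx; move: odt; case: (nat_of_ord t).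
have Sxt : ordS x = t by apply: val_inj; rewrite ordS_even // vx prednK.
exists (tperm x (ordS x) * pair_swap x)%g; first by rewrite permM Sxt tpermR pair_swap_x.
by move=> u; rewrite -mulgA pf_summand_tperm // pf_summand_pair_swap.
Qed.

Lemma pf_sum_fixed0 :
  pf_sum A = (m.+2)%:R * \sum_(s : 'S_m.+2 | s ord0 == ord0) F s.
Proof.
rewrite /pf_sum (partition_big (fun s : 'S_m.+2 => (s^-1)%g ord0) xpredT) //=.
transitivity (\sum_(t : 'I_m.+2) \sum_(s : 'S_m.+2 | s ord0 == ord0) F s);
  last by rewrite sumr_const card_ord mulr_natl.
apply: eq_bigr => t _; have [tau tau_t F_tau] := pf_summand_move_to_front t.
rewrite (reindex_inj (mulgI tau)); apply: eq_big => [s | s _]; last exact: F_tau.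
by rewrite -(inj_eq (@perm_inj _ (tau * s))) permKV permM tau_t eq_sym.
Qed.

Lemma pf_summand_lift_perm (j : 'I_m.+1) (v : 'S_m) :
  F (lift_perm ord0 ord0 (lift_perm ord0 j v)) =
  (-1) ^+ j * A ord0 (lift ord0 j) * ((-1) ^+ v * pf_term (pf_minor A j) v).
Proof.
rewrite /F !odd_lift_perm /= signr_addb signr_odd -!mulrA; congr (_ * _).
rewrite mulrCA; congr (_ * _).
rewrite !pf_termE // big_mkcond big_ord_recl big_ord_recl /=.
have -> : ordS ord0 = lift ord0 ord0 :> 'I_m.+2 by apply: val_inj; rewrite ordS_even.
rewrite lift_perm_id lift_perm_lift lift_perm_id mul1r; congr (_ * _).
rewrite [in RHS]big_mkcond; apply: eq_bigr => i _.
rewrite add0n !negbK; case: ifP => // odi.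
have -> : ordS (lift ord0 (lift ord0 i)) = lift ord0 (lift ord0 (ordS i)) :> 'I_m.+2.
  have lt_Si_m : (i.+1 < m)%N by apply: ltn_succ_even; rewrite ?odi.
  by rewrite !ordS_lift0 // lift0.
by rewrite !lift_perm_lift !mxE.
Qed.

Lemma pf_sum_expand : pf_sum A =
  (m.+2)%:R * \sum_(j < m.+1) (-1) ^+ j * A ord0 (lift ord0 j) * pf_sum (pf_minor A j).
Proof.
rewrite pf_sum_fixed0 sum_perm_lift.
rewrite (partition_big (fun v : 'S_m.+1 => v ord0) xpredT) //=; congr (_ * _).
apply: eq_bigr => j _; rewrite sum_perm_lift mulr_sumr.
by apply: eq_bigr => v _; exact: pf_summand_lift_perm.
Qed.

End Expansion.
End PfaffianSum.

Lemma pf_normalizer_SS m : ~~ odd m ->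
  (2 ^ (m./2).+1 * (m./2).+1`!)%N = (m.+2 * (2 ^ m./2 * (m./2)`!))%N.
Proof.
move=> evm; have m_2h : m = (m./2).*2 by rewrite -{1}(odd_double_half m) (negbTE evm).
rewrite expnS factS; move: m_2h; set h := m./2 => ->; rewrite -mul2n; nia.
Qed.

Lemma pfaffian_expand (R : numFieldType) m (A : 'M[R]_m.+2) :
  (forall i j, A i j = - A j i) ->
  pfaffian A = \sum_(j < m.+1) (-1) ^+ j * A ord0 (lift ord0 j) * pfaffian (pf_minor A j).
Proof.
move=> A_skew; rewrite /pfaffian /= negbK; case: ifP => [_ | /negbT evm].
  by rewrite big1 // => j _; rewrite mulr0.
rewrite -/(pf_sum A) (pf_sum_expand evm A_skew) pf_normalizer_SS // natrM invfM.
rewrite -!mulrA mulrCA mulKf ?pnatr_eq0 // big_distrr.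
by apply: eq_bigr => j _; rewrite mulrCA.
Qed.

Lemma pfaffian0 (R : fieldType) (A : 'M[R]_0) : pfaffian A = 1.
Proof.
rewrite /pfaffian /= invr1 mul1r (big_pred1 1%g).
  by rewrite odd_perm1 expr0 mul1r big1 // => -[].
by move=> s /=; apply/esym/eqP/permP => -[].
Qed.

Lemma skew_upper_skew (R : zmodType) n (M : 'I_n -> 'I_n -> R) i j :
  skew_upper M i j = - skew_upper M j i.
Proof. by rewrite !mxE; case: ltngtP; rewrite ?opprK ?oppr0. Qed.

Lemma pf_minor_skew_upper (R : comNzRingType) m (M : 'I_m.+2 -> 'I_m.+2 -> R) j :
  pf_minor (skew_upper M) j =
  skew_upper (fun a b : 'I_m => M (lift ord0 (lift j a)) (lift ord0 (lift j b))).
Proof.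
have lift_ltn (a b : 'I_m) : (lift ord0 (lift j a) < lift ord0 (lift j b))%N = (a < b)%N.
  by rewrite !lift0 ltnS /= /bump; case: (leqP j a); case: (leqP j b) => /= ? ?; lia.
by apply/matrixP => a b; rewrite !mxE !lift_ltn.
Qed.

(* Also true for m = 0, where both sides vanish. *)
Lemma pfaffian_skew_upper_expand (R : numFieldType) m (M : 'I_m.+1 -> 'I_m.+1 -> R) :
  pfaffian (skew_upper M) =
  \sum_(j < m) (-1) ^+ j * M ord0 (lift ord0 j) *
    pfaffian (skew_upper (fun a b : 'I_m.-1 =>
                 M (lift ord0 (lift j a)) (lift ord0 (lift j b)))).
Proof.
case: m M => [|m] M; first by rewrite /pfaffian /= big_ord0.
rewrite pfaffian_expand; last exact: skew_upper_skew.
by apply: eq_bigr => j _; rewrite pf_minor_skew_upper !mxE lift0.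
Qed.

Section AnticommutatorExpansion.
Variables (R : comNzRingType) (A : algType R).

Lemma prod_lift_lift0 m (Z : 'I_m.+1 -> A) (j : 'I_m) :
  \prod_(i < m) Z (lift (lift ord0 j) i) =
  Z ord0 * \prod_(i < m.-1) Z (lift ord0 (lift j i)).
Proof.
case: m Z j => [|m] Z j; first by case: j.
rewrite big_ord_recl; congr (_ * _).
  by congr (Z _); apply: val_inj; rewrite /= /bump; lia.
by apply: eq_bigr => i _; congr (Z _); apply: val_inj; rewrite /= /bump /=; lia.
Qed.

Lemma mul_prod_anticomm m (x : A) (Z : 'I_m -> A) (c : 'I_m -> R) :
  (forall i, x * Z i + Z i * x = (c i)%:A) ->
  x * \prod_(i < m) Z i =
  \sum_(j < m) ((-1) ^+ j * c j) *: \prod_(i < m.-1) Z (lift j i)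
  + (-1) ^+ m *: (\prod_(i < m) Z i * x).
Proof.
elim: m Z c => [|m IH] Z c xZ; first by rewrite !big_ord0 add0r scale1r mul1r mulr1.
rewrite big_ord_recl mulrA.
have -> : x * Z ord0 = (c ord0)%:A - Z ord0 * x by rewrite -(xZ ord0) addrK.
rewrite mulrBl -[Z ord0 * x * _]mulrA (IH _ (fun i => c (lift ord0 i))) //.
rewrite big_ord_recl /= expr0 mul1r mulr_algl -addrA; congr (_ + _).
rewrite mulrDr mulr_sumr opprD; congr (_ + _).
  rewrite -sumrN; apply: eq_bigr => j _.
  by rewrite prod_lift_lift0 -scalerAr exprS mulN1r !mulNr scaleNr.
by rewrite -scalerAr exprS mulN1r scaleNr !mulrA.
Qed.

End AnticommutatorExpansion.

Section ProdAnnihilation.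
Variables (T : pzSemiRingType) (I : eqType) (F : I -> T) (x : T) (j : I).

Lemma mul_prodr_eq0 (r : seq I) : j \in r -> x * F j = 0 ->
  (forall i, i != j -> GRing.comm x (F i)) -> x * \prod_(i <- r) F i = 0.
Proof.
move=> + xFj xF; elim: r => // i r IH; rewrite in_cons big_cons mulrA.
case: (eqVneq j i) => [<- _ | ji /= jr]; first by rewrite xFj mul0r.
by rewrite xF 1?eq_sym // -mulrA IH ?mulr0.
Qed.

Lemma prodr_mul_eq0 (r : seq I) : j \in r -> F j * x = 0 ->
  (forall i, i != j -> GRing.comm (F i) x) -> \prod_(i <- r) F i * x = 0.
Proof.
move=> + Fjx Fx; elim: r => // i r IH; rewrite in_cons big_cons -mulrA.
have [jr _ | jr] := boolP (j \in r); first by rewrite IH ?mulr0.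
rewrite orbF => /eqP ji.
have xr : GRing.comm x (\prod_(l <- r) F l).
  rewrite big_seq; apply: commr_prod => l lr; apply/commr_sym/Fx.
  by apply: contraNneq jr => <-.
by rewrite -xr mulrA -ji Fjx mul0r.
Qed.

End ProdAnnihilation.

Lemma addr_self_eq0 (R : numFieldType) (V : lmodType R) (y : V) : y + y = 0 -> y = 0.
Proof.
move=> yy; have : (2%:R : R) *: y = 0 by rewrite scaler_nat mulr2n.
by move/eqP; rewrite scaler_eq0 pnatr_eq0 => /eqP.
Qed.

Lemma mulr_anticomm (T : pzRingType) (x y : T) : x * y + y * x = 0 -> x * y = - (y * x).
Proof. by move=> /eqP; rewrite addr_eq0 => /eqP. Qed.

Section GhostVacuum.
Variables (R : numFieldType) (A : algType R) (N : nat) (g gd : 'I_N -> A).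
Hypothesis car_ggd : forall k l, g k * gd l + gd l * g k = (k == l)%:R.
Hypothesis car_gg : forall k l, g k * g l + g l * g k = 0.
Hypothesis car_gdgd : forall k l, gd k * gd l + gd l * gd k = 0.

Definition ghost (q : bool * 'I_N) : A := if q.1 then g q.2 else gd q.2.
Definition vac_proj k := g k * gd k.
Definition vacuum_proj := \prod_(k < N) vac_proj k.

(* (true, k) labels the annihilator g_k and (false, k) the creator g_k^dag, as
   in the expansion of a_i; vac_contraction is theta(p_i) delta_{p_i,-p_j}. *)
Definition vac_contraction n (p : 'I_n -> bool * 'I_N) (i j : 'I_n) : R :=
  ((p i).1 && (p i == (~~ (p j).1, (p j).2)))%:R.

Lemma g_sq k : g k * g k = 0. Proof. exact/addr_self_eq0/car_gg. Qed.
Lemma gd_sq k : gd k * gd k = 0. Proof. exact/addr_self_eq0/car_gdgd. Qed.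

Lemma commr_g_vac_proj k l : k != l -> GRing.comm (g k) (vac_proj l).
Proof.
move=> kl; have g_gd : g k * gd l + gd l * g k = 0 by rewrite car_ggd (negbTE kl).
rewrite /GRing.comm /vac_proj mulrA (mulr_anticomm (car_gg k l)) mulNr.
by rewrite -[g l * g k * gd l]mulrA (mulr_anticomm g_gd) mulrN opprK mulrA.
Qed.

Lemma commr_gd_vac_proj k l : k != l -> GRing.comm (gd k) (vac_proj l).
Proof.
move=> kl; have gd_g : gd k * g l + g l * gd k = 0.
  by rewrite addrC car_ggd eq_sym (negbTE kl).
rewrite /GRing.comm /vac_proj mulrA (mulr_anticomm gd_g) mulNr.
by rewrite -[g l * gd k * gd l]mulrA (mulr_anticomm (car_gdgd k l)) mulrN opprK mulrA.
Qed.

Lemma commr_vac_proj k l : GRing.comm (vac_proj k) (vac_proj l).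
Proof.
have [->|kl] := eqVneq k l; first exact: commr_refl.
apply/commr_sym/commrM; apply/commr_sym;
  [exact: commr_g_vac_proj | exact: commr_gd_vac_proj].
Qed.

Lemma vac_proj_idem k : vac_proj k * vac_proj k = vac_proj k.
Proof.
rewrite /vac_proj mulrA -[g k * gd k * g k]mulrA.
have -> : gd k * g k = 1 - g k * gd k.
  by apply/eqP; rewrite eq_sym subr_eq addrC car_ggd eqxx.
by rewrite mulrBr mulr1 mulrA g_sq mul0r subr0.
Qed.

Lemma g_vacuum_proj k : g k * vacuum_proj = 0.
Proof.
apply: (mul_prodr_eq0 (j := k)); rewrite ?mem_index_enum //.
  by rewrite /vac_proj mulrA g_sq mul0r.
by move=> l lk; apply: commr_g_vac_proj; rewrite eq_sym.
Qed.

Lemma vacuum_proj_gd k : vacuum_proj * gd k = 0.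
Proof.
apply: (prodr_mul_eq0 (j := k)); rewrite ?mem_index_enum //.
  by rewrite /vac_proj -mulrA gd_sq mulr0.
by move=> l lk; apply/commr_sym/commr_gd_vac_proj; rewrite eq_sym.
Qed.

Lemma vacuum_proj_idem : vacuum_proj * vacuum_proj = vacuum_proj.
Proof.
rewrite /vacuum_proj -prodrM_comm; last by move=> *; apply: commr_vac_proj.
by apply: eq_bigr => k _; apply: vac_proj_idem.
Qed.

Lemma commr_vacuum_proj (w : A) :
  (forall k, GRing.comm w (g k)) -> (forall k, GRing.comm w (gd k)) ->
  GRing.comm w vacuum_proj.
Proof. by move=> wg wgd; apply: commr_prod => k _; apply: commrM. Qed.

Lemma vacuum_wick n (p : 'I_n -> bool * 'I_N) :
  vacuum_proj * \prod_(i < n) ghost (p i) * vacuum_proj =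
  pfaffian (skew_upper (vac_contraction p)) *: vacuum_proj.
Proof.
elim/ltn_ind: n p => -[|m] IH p.
  by rewrite big_ord0 mulr1 vacuum_proj_idem pfaffian0 scale1r.
rewrite pfaffian_skew_upper_expand big_ord_recl scaler_suml.
case p0E : (p ord0) => [[] k]; last first.
  rewrite /ghost /= mulrA vacuum_proj_gd !mul0r big1 // => j _.
  by rewrite /vac_contraction p0E /= mulr0 mul0r scale0r.
pose c (j : 'I_m) := (p (lift ord0 j) == (false, k))%:R : R.
rewrite [ghost _]/ghost /= (@mul_prod_anticomm _ _ _ _ _ c); last first.
  move=> i; rewrite /c /ghost; case: (p (lift ord0 i)) => [[] l] /=.
  - by rewrite car_gg scale0r.
  - by rewrite car_ggd scaler_nat xpair_eqE /= eq_sym.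
rewrite mulrDr mulrDl -scalerAr -scalerAl.
have -> : vacuum_proj * (\prod_(i < m) ghost (p (lift ord0 i)) * g k) * vacuum_proj = 0.
  by rewrite -!mulrA g_vacuum_proj !mulr0.
rewrite scaler0 addr0 mulr_sumr mulr_suml.
apply: eq_bigr => j _; rewrite -scalerAr -scalerAl IH ?scalerA; last first.
  by rewrite ltnS leq_pred.
congr ((_ * _ * _) *: _).
rewrite /c /vac_contraction p0E /=; case: (p (lift ord0 j)) => [[] l] //=.
by rewrite !xpair_eqE /= eq_sym.
Qed.

End GhostVacuum.

Lemma sum_bool_pair (V : nmodType) (I : finType) (F : bool * I -> V) :
  \sum_(q : bool * I) F q = \sum_(k : I) (F (true, k) + F (false, k)).
Proof.
rewrite (eq_bigr (fun q => F (q.1, q.2))) => [|[] //].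
rewrite -(pair_bigA _ (fun b k => F (b, k))) exchange_big /=.
by apply: eq_bigr => k _; rewrite big_bool.
Qed.

Theorem lemma1 (R : numClosedFieldType) (A : algType R) (L : nat)
  (L_gt0 : (0 < L)%N)
  (dag : A -> A)
  (dag_add : forall x y, dag (x + y) = dag x + dag y)
  (dag_scale : forall (c : R) x, dag (c *: x) = c^* *: dag x)
  (dag_mul : forall x y, dag (x * y) = dag y * dag x)
  (dag_invol : forall x, dag (dag x) = x)
  (g gd : 'I_(L./2) -> A)
  (gd_def : forall k, gd k = dag (g k))
  (car_ggd : forall k l, g k * gd l + gd l * g k = (k == l)%:R)
  (car_gg : forall k l, g k * g l + g l * g k = 0)
  (car_gdgd : forall k l, gd k * gd l + gd l * gd k = 0)
  (n : nat) (W : 'I_n -> mom L -> A)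
  (W_adj : forall i k, W i (false, k) = dag (W i (true, k)))
  (W_g : forall i q k, W i q * g k = g k * W i q)
  (W_gd : forall i q k, W i q * gd k = gd k * W i q) :
  let G0 := \prod_(k < L./2) (g k * gd k) in
  let a := fun i : 'I_n =>
    (sqrtC (L%:R : R))^-1 *:
      \sum_(k < L./2) (W i (true, k) * g k + W i (false, k) * gd k) in
  G0 * (\prod_(i < n) a i) * G0 =
  ((sqrtC (L%:R : R))^-1) ^+ n *:
    \sum_(p : {ffun 'I_n -> mom L})
      (\prod_(i < n) W i (p i)) *
      (pfaffian (skew_upper (fun i j : 'I_n =>
                   ((theta (p i) && (p i == momneg (p j))) %:R : R)))
        *: G0).
Proof.
move=> G0 a; set c := (sqrtC (L%:R : R))^-1.
have aE i : a i = c *: \sum_(q : mom L) W i q * ghost g gd q by rewrite sum_bool_pair.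
rewrite (eq_bigr _ (fun i _ => aE i)) scaler_prod prodr_const card_ord bigA_distr_bigA /=.
rewrite -scalerAr -scalerAl mulr_sumr mulr_suml; congr (_ *: _).
apply: eq_bigr => p _; set PW := \prod_(i < n) W i (p i).
have W_ghost i q q' : GRing.comm (W i q) (ghost g gd q').
  by case: q' => [[] k]; rewrite /GRing.comm /ghost /= ?W_g ?W_gd.
have PW_G0 : GRing.comm PW G0.
  by apply: commr_vacuum_proj => k; apply/commr_sym/commr_prod => i _; rewrite /GRing.comm ?W_g ?W_gd.
rewrite prodrM_comm; last by move=> i j _ _; apply: W_ghost.
have -> : G0 * (PW * \prod_(i < n) ghost g gd (p i)) * G0 =
          PW * (G0 * \prod_(i < n) ghost g gd (p i) * G0) by rewrite mulrA -PW_G0 -!mulrA.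
by rewrite (vacuum_wick car_ggd car_gg car_gdgd).
Qed.
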